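(* Let $\mathbf{C}$ be a covering of a finite nonempty set $U$. Then $Cov(\mathbf{C})=\mathbf{C}$ if and only if $\mathbf{C}$ is an invariable covering.
   Context: A covering of $U$ is a family (set) $\mathbf{C}$ of subsets of $U$ with $\emptyset\notin\mathbf{C}$ and $\bigcup\mathbf{C}=U$; its elements are called blocks. For $x\in U$, the neighborhood of $x$ is $N(x)=\bigcap\{K\in\mathbf{C}: x\in K\}$, and $Cov(\mathbf{C})=\{N(x): x\in U\}$. The membership repeat degree of $x\in U$ is $\partial(x)=|\{K\in\mathbf{C}: x\in K\}|$. The common block repeat degree of $(x,y)\in U\times U$ is $\lambda(x,y)=|\{K\in\mathbf{C}: \{x,y\}\subseteq K\}|$. A block $K\in\mathbf{C}$ is a core block of $x\in U$ if $x\in K$ and $\lambda(x,y)=\partial(x)$ for every $y\in K$. A block $K\in\mathbf{C}$ is a reducible element of $\mathbf{C}$ if $K$ is the union of some subfamily of $\mathbf{C}\setminus\{K\}$; otherwise it is irreducible. $\mathbf{C}$ is irreducible if all its blocks are irreducible elements. $\mathbf{C}$ is an invariable covering if $\mathbf{C}$ is irreducible and every $x\in U$ has a core block in $\mathbf{C}$. *)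

From mathcomp Require Import all_boot.
Set Implicit Arguments. Unset Strict Implicit. Unset Printing Implicit Defensive.

Section Cov.
Variable T : finType.

Definition is_covering (U : {set T}) (C : {set {set T}}) : Prop :=
  set0 \notin C /\ (forall K, K \in C -> K \subset U) /\ cover C = U.

Definition nbhd (C : {set {set T}}) (x : T) : {set T} :=
  \bigcap_(K in C | x \in K) K.

Definition Cov (U : {set T}) (C : {set {set T}}) : {set {set T}} :=
  [set nbhd C x | x in U].

Definition mrd (C : {set {set T}}) (x : T) : nat := #|[set K in C | x \in K]|.

Definition cbrd (C : {set {set T}}) (x y : T) : nat :=
  #|[set K in C | (x \in K) && (y \in K)]|.

Definition core_block (C : {set {set T}}) (x : T) (K : {set T}) : Prop :=
  K \in C /\ x \in K /\ (forall y, y \in K -> cbrd C x y = mrd C x).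

Definition reducible (C : {set {set T}}) (K : {set T}) : Prop :=
  exists F : {set {set T}}, F \subset C :\ K /\ cover F = K.

Definition irreducible_cov (C : {set {set T}}) : Prop :=
  forall K, K \in C -> ~ reducible C K.

Definition invariable (U : {set T}) (C : {set {set T}}) : Prop :=
  irreducible_cov C /\ (forall x, x \in U -> exists K, core_block C x K).

End Cov.

From mathcomp Require Import all_boot.

(* The key observation is that N(x) is the least block-intersection containing
   x, and that lambda(x,y) = partial(x) holds exactly when y lies in N(x)
   (every block through x then also contains y).  Hence the core blocks of x
   are exactly N(x), provided N(x) is a block.  Two further general facts:
   - a block of the form N(x) is never reducible, since any block covering x
     already contains N(x);
   - every block K is the union of the neighbourhoods of its points, so in an
     irreducible family whose neighbourhoods are all blocks, each block K is
     N(x) for some x in K.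
   The theorem follows: if Cov(C) = C every block is a neighbourhood, which
   gives irreducibility and core blocks; conversely core blocks put every N(x)
   in C, and irreducibility puts every block in Cov(C). *)

Section Neighbourhoods.
Variable T : finType.
Variable C : {set {set T}}.
Implicit Types (K : {set T}) (x y : T).

Lemma in_nbhd x y : (y \in nbhd C x) = [forall K in C, (x \in K) ==> (y \in K)].
Proof.
apply/bigcapP/forall_inP.
  by move=> H K KC; apply/implyP => xK; apply: H; rewrite KC xK.
by move=> H K /andP[KC xK]; exact: (implyP (H K KC)).
Qed.

Lemma nbhd_self x : x \in nbhd C x.
Proof. by rewrite in_nbhd; apply/forall_inP => K _; apply/implyP. Qed.

Lemma nbhd_sub K x : K \in C -> x \in K -> nbhd C x \subset K.
Proof.
move=> KC xK; apply/subsetP => y.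
by rewrite in_nbhd => /forall_inP/(_ K KC)/implyP; apply.
Qed.

(* lambda(x,y) = partial(x) exactly when y belongs to N(x): the blocks
   containing x and y form a subfamily of those containing x, with equal
   size iff they coincide. *)
Lemma cbrd_mrd x y : (cbrd C x y == mrd C x) = (y \in nbhd C x).
Proof.
rewrite /cbrd /mrd.
have sub : [set K in C | (x \in K) && (y \in K)] \subset [set K in C | x \in K].
  by apply/subsetP => K; rewrite !inE => /and3P[-> -> _].
rewrite (subset_leqif_card sub) in_nbhd; apply/idP/forall_inP.
- move=> /subsetP Exy K KC; apply/implyP => xK.
  have : K \in [set K in C | x \in K] by rewrite inE KC.
  by move/Exy; rewrite !inE => /and3P[].
- move=> yN; apply/subsetP => K; rewrite !inE.
  by case/andP=> KC xK; rewrite KC xK (implyP (yN K KC)).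
Qed.

Lemma core_blockE x K : core_block C x K <-> K \in C /\ K = nbhd C x.
Proof.
split.
- move=> [KC [xK core]]; split=> //; apply/eqP.
  rewrite eqEsubset nbhd_sub // andbT.
  by apply/subsetP => y yK; rewrite -cbrd_mrd core.
- move=> [KC EK]; subst K; split=> //; split; first exact: nbhd_self.
  by move=> y yN; apply/eqP; rewrite cbrd_mrd.
Qed.

(* A neighbourhood is never a union of other blocks: the block of the
   subfamily covering x would contain N(x) and so equal it. *)
Lemma nbhd_not_reducible x : ~ reducible C (nbhd C x).
Proof.
move=> [F [FS covF]].
have : x \in cover F by rewrite covF nbhd_self.
case/bigcupP => K KF xK.
have := subsetP FS _ KF; rewrite !inE => /andP[KneN KC].
have KsubN : K \subset nbhd C x by rewrite -covF; exact: bigcup_sup.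
by move: KneN; rewrite eqEsubset KsubN nbhd_sub.
Qed.

Lemma cover_nbhds K : K \in C -> cover [set nbhd C x | x in K] = K.
Proof.
move=> KC; apply/eqP; rewrite eqEsubset; apply/andP; split.
  by apply/bigcupsP => N /imsetP[x xK ->]; exact: nbhd_sub.
apply/subsetP => x xK; apply/bigcupP; exists (nbhd C x); last exact: nbhd_self.
by apply/imsetP; exists x.
Qed.

Lemma irreducible_block_nbhd K :
  irreducible_cov C -> K \in C -> {in K, forall x, nbhd C x \in C} ->
  exists2 x, x \in K & K = nbhd C x.
Proof.
move=> irr KC NC.
case: (boolP [exists x in K, nbhd C x == K]).
  by case/exists_inP => x xK /eqP NeK; exists x.
move=> /exists_inPn NneK.
exfalso; apply: (irr K KC); exists [set nbhd C x | x in K].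
split; last exact: cover_nbhds.
by apply/subsetP => N /imsetP[x xK ->]; rewrite !inE NneK // NC.
Qed.

End Neighbourhoods.

Theorem theorem23 (T : finType) (U : {set T}) (C : {set {set T}}) :
  U != set0 -> is_covering U C ->
  (Cov U C = C <-> invariable U C).
Proof.
(* Only the inclusion of the blocks in U is needed. *)
move=> _ [_ [CU _]]; split.
- move=> CovE; split.
  + by move=> K; rewrite -{1}CovE => /imsetP[x _ ->]; exact: nbhd_not_reducible.
  + move=> x xU; exists (nbhd C x); apply/core_blockE; split=> //.
    by rewrite -[in X in _ \in X]CovE; apply/imsetP; exists x.
- move=> [irr core].
  have NC x : x \in U -> nbhd C x \in C.
    by move=> /core[K /core_blockE[KC <-]].
  apply/eqP; rewrite eqEsubset; apply/andP; split.
    by apply/subsetP => K /imsetP[x xU ->]; exact: NC.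
  apply/subsetP => K KC.
  have KU := subsetP (CU K KC).
  have [x xK ->] := @irreducible_block_nbhd _ _ _ irr KC (fun x xK => NC x (KU x xK)).
  by apply/imsetP; exists x; first exact: KU.
Qed.
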